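(* Let $a<b$, let $\alpha\in(0,1]$, let $k:[a,b]\to\mathbb{R}$ be a continuous nonnegative map, differentiable at every $t>a$, with $k(t)\neq 0$ and $k'(t)\neq 0$ whenever $t>a$. Let $t\in(a,b)$ with $t>0$ and let $f,g:[a,b]\to\mathbb{R}$ be $\alpha$-differentiable at $t$. Then: (1) $D^{\alpha}(\lambda f+\mu g)(t)=\lambda D^{\alpha}(f)(t)+\mu D^{\alpha}(g)(t)$ for all $\lambda,\mu\in\mathbb{R}$; (2) $D^{\alpha}(s\mapsto s^{n})(t)=\frac{(k(t))^{1-\alpha}}{k'(t)}\,n t^{n-1}$ for all $n\in\mathbb{R}$; (3) $D^{\alpha}(c)(t)=0$ for every constant function $c$; (4) $D^{\alpha}(fg)(t)=f(t)D^{\alpha}(g)(t)+g(t)D^{\alpha}(f)(t)$; (5) if $g(t)\neq 0$, then $D^{\alpha}\left(\frac{f}{g}\right)(t)=\dfrac{g(t)D^{\alpha}(f)(t)-f(t)D^{\alpha}(g)(t)}{[g(t)]^{2}}$; (6) if $g$ is differentiable at $t$ and $f$ (defined on an interval containing the range of $g$) is differentiable at $g(t)$, then $D^{\alpha}(f\circ g)(t)=\frac{(k(t))^{1-\alpha}}{k'(t)}\,f'(g(t))\,g'(t)$.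
   Context: For $k$ as in the claim, a real function $f$ defined near $t\in(a,b)$, and $\alpha\in(0,1]$, the generalized fractional derivative of $f$ of order $\alpha$ at $t$ is $$D^{\alpha}(f)(t)=f^{(\alpha)}(t):=\lim_{\varepsilon\to 0}\frac{f\left(t-k(t)+k(t)\,e^{\varepsilon\frac{(k(t))^{-\alpha}}{k'(t)}}\right)-f(t)}{\varepsilon},$$ and $f$ is called $\alpha$-differentiable at $t$ if this limit exists. *)

From Stdlib Require Import Reals.
From Coquelicot Require Import Coquelicot.
Open Scope R_scope.

Definition frac_arg (k : R -> R) (alpha t eps : R) : R :=
  t - k t + k t * exp (eps * Rpower (k t) (- alpha) / Derive k t).

Definition frac_quot (k : R -> R) (alpha : R) (f : R -> R) (t : R) : R -> R :=
  fun eps => (f (frac_arg k alpha t eps) - f t) / eps.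

Definition is_frac_deriv (k : R -> R) (alpha : R) (f : R -> R) (t l : R) : Prop :=
  is_lim (frac_quot k alpha f t) 0 (Finite l).

Definition frac_differentiable (k : R -> R) (alpha : R) (f : R -> R) (t : R) : Prop :=
  exists l : R, is_frac_deriv k alpha f t l.

(* The value D^alpha(f)(t) (meaningful when f is alpha-differentiable at t). *)
Definition frac_deriv (k : R -> R) (alpha : R) (f : R -> R) (t : R) : R :=
  real (Lim (frac_quot k alpha f t) 0).

(** The substitution [eps |-> t - k t + k t * exp (eps * k(t)^(-alpha) / k'(t))] is
    a local diffeomorphism of a neighbourhood of [0] onto one of [t], with
    derivative [k(t)^(1-alpha) / k'(t)] at [0] (for [k t > 0] and [k'(t) <> 0]).
    Hence [f] is alpha-differentiable at [t] exactly when it is differentiable there,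
    and [D^alpha f (t) = k(t)^(1-alpha) / k'(t) * f'(t)]; the six rules are then the
    classical rules of differentiation, rescaled. *)

From Stdlib Require Import Reals Lra.
From Coquelicot Require Import Coquelicot.
Open Scope R_scope.

Lemma locally'_0_intro (P : R -> Prop) (d : R) :
  0 < d -> (forall y, y <> 0 -> Rabs y < d -> P y) -> locally' 0 P.
Proof.
  intros Hd HP. exists (mkposreal d Hd). intros y Hy Hne.
  apply HP; [exact Hne|].
  unfold ball in Hy; simpl in Hy. unfold AbsRing_ball, abs, minus, plus, opp in Hy; simpl in Hy.
  now rewrite Ropp_0, Rplus_0_r in Hy.
Qed.

Definition diff_quot (F : R -> R) (t : R) : R -> R :=
  fun y => (F (t + y) - F t) / y.

Lemma is_derive_iff_diff_quot (F : R -> R) (t d : R) :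
  is_derive F t d <-> is_lim (diff_quot F t) 0 d.
Proof.
  rewrite is_derive_Reals. split.
  - intros HF. apply is_lim_spec. intros eps.
    destruct (HF eps (cond_pos eps)) as [del Hdel].
    apply (locally'_0_intro _ del (cond_pos del)). intros y Hy Hy'. now apply Hdel.
  - intros HF. apply is_lim_spec in HF. intros eps Heps.
    destruct (HF (mkposreal eps Heps)) as [del Hdel].
    exists del. intros y Hy Hy'. apply Hdel; [|exact Hy].
    unfold ball; simpl. unfold AbsRing_ball, abs, minus, plus, opp; simpl.
    now rewrite Ropp_0, Rplus_0_r.
Qed.

Lemma is_lim_quot_scal (h : R -> R) (a : R) :
  a <> 0 -> is_lim (fun y => h y / y) 0 1 -> is_lim (fun y => h (a * y) / y) 0 a.
Proof.
  intros Ha Hh.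
  apply (is_lim_ext_loc (fun y => a * (h (a * y + 0) / (a * y + 0)))).
  - apply (locally'_0_intro _ 1); [lra|]. intros y Hy _.
    rewrite Rplus_0_r. field. split; assumption.
  - replace (Finite a) with (Rbar_mult a 1) by (simpl; f_equal; ring).
    apply is_lim_scal_l, (is_lim_comp_lin (fun y => h y / y)); [|exact Ha].
    replace (Rbar_plus (Rbar_mult a 0) 0) with (Finite 0) by (simpl; f_equal; ring).
    exact Hh.
Qed.

Lemma is_lim_0_of_quot (h : R -> R) (m : R) :
  is_lim (fun e => h e / e) 0 m -> is_lim h 0 0.
Proof.
  intros Hh. apply (is_lim_ext_loc (fun e => h e / e * e)).
  - apply (locally'_0_intro _ 1); [lra|]. intros y Hy _. field. exact Hy.
  - pose proof (is_lim_mult _ _ 0 m 0 Hh (is_lim_id 0) I) as Hlim.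
    simpl in Hlim. now rewrite Rmult_0_r in Hlim.
Qed.

Lemma is_lim_comp_quot (Q phi : R -> R) (l m : R) :
  is_lim Q 0 l -> is_lim (fun e => phi e / e) 0 m ->
  locally' 0 (fun e => phi e <> 0) ->
  is_lim (fun e => Q (phi e) * (phi e / e)) 0 (l * m).
Proof.
  intros HQ Hphi Hne.
  apply (is_lim_mult (fun e => Q (phi e)) _ 0 l m); [|exact Hphi|exact I].
  apply (is_lim_comp Q phi 0 l 0); [exact HQ | exact (is_lim_0_of_quot _ _ Hphi)|].
  apply (filter_imp _ _ (fun y Hy E => Hy (proj1 (Rbar_finite_eq _ _) E)) Hne).
Qed.

Section ExpReparametrization.

Variables (F : R -> R) (t K c : R).
Hypotheses (HK : 0 < K) (Hc : c <> 0).

Lemma is_lim_exp_reparam_quot (d : R) :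
  is_derive F t d ->
  is_lim (fun e => (F (t + K * (exp (c * e) - 1)) - F t) / e) 0 (d * (K * c)).
Proof.
  intros HF. set (phi := fun e => K * (exp (c * e) - 1)).
  assert (Hphi : is_lim (fun e => phi e / e) 0 (K * c)).
  { apply (is_lim_ext_loc (fun e => K * ((exp (c * e) - 1) / e))).
    - apply (locally'_0_intro _ 1); [lra|]. intros y Hy _. unfold phi. field. exact Hy.
    - apply (is_lim_scal_l _ K 0 c).
      apply (is_lim_quot_scal (fun y => exp y - 1) c Hc is_lim_div_expm1_0). }
  assert (Hne : forall e, e <> 0 -> phi e <> 0).
  { intros e He E. apply Rmult_integral in E as [E|E]; [lra|].
    assert (Hce : c * e = 0) by (apply exp_inv; rewrite exp_0; lra).
    apply Rmult_integral in Hce as [H|H]; contradiction. }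
  apply (is_lim_ext_loc (fun e => diff_quot F t (phi e) * (phi e / e))).
  - apply (locally'_0_intro _ 1); [lra|]. intros e He _.
    change (K * (exp (c * e) - 1)) with (phi e). unfold diff_quot.
    field. split; [exact He | exact (Hne e He)].
  - apply (is_lim_comp_quot (diff_quot F t) phi); [now apply is_derive_iff_diff_quot | exact Hphi |].
    apply (locally'_0_intro _ 1); [lra|]. intros e He _. exact (Hne e He).
Qed.

(* The inverse substitution is [y |-> ln (1 + y / K) / c], defined for [|y| < K]. *)
Lemma is_derive_of_exp_reparam_quot (l : R) :
  is_lim (fun e => (F (t + K * (exp (c * e) - 1)) - F t) / e) 0 l ->
  is_derive F t (l / (K * c)).
Proof.
  intros HF. apply is_derive_iff_diff_quot.
  set (Q := fun e => (F (t + K * (exp (c * e) - 1)) - F t) / e) in HF.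
  set (psi := fun y => / c * ln (1 + / K * y)).
  assert (Hpsi : is_lim (fun y => psi y / y) 0 (/ c * / K)).
  { apply (is_lim_ext_loc (fun y => / c * (ln (1 + / K * y) / y))).
    - apply (locally'_0_intro _ 1); [lra|]. intros y Hy _. unfold psi. field. split; assumption.
    - apply (is_lim_scal_l _ (/ c) 0 (/ K)).
      apply (is_lim_quot_scal (fun y => ln (1 + y))); [apply Rinv_neq_0_compat; lra|].
      exact is_lim_div_ln1p_0. }
  assert (Hpos : forall y, Rabs y < K -> 0 < 1 + / K * y).
  { intros y Hy. apply Rabs_def2 in Hy.
    replace (1 + / K * y) with ((K + y) / K) by (field; lra).
    apply Rdiv_lt_0_compat; lra. }
  assert (Hinv : forall y, Rabs y < K -> K * (exp (c * psi y) - 1) = y).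
  { intros y Hy. unfold psi. replace (c * (/ c * ln (1 + / K * y))) with (ln (1 + / K * y))
      by (field; exact Hc).
    rewrite exp_ln by exact (Hpos y Hy). field. lra. }
  assert (Hne : forall y, y <> 0 -> Rabs y < K -> psi y <> 0).
  { intros y Hy HyK E. apply Hy. rewrite <- (Hinv y HyK), E, Rmult_0_r, exp_0. ring. }
  apply (is_lim_ext_loc (fun y => Q (psi y) * (psi y / y))).
  - apply (locally'_0_intro _ K HK). intros y Hy HyK.
    unfold Q, diff_quot. rewrite (Hinv y HyK). field. split; [exact Hy | exact (Hne y Hy HyK)].
  - replace (l / (K * c)) with (l * (/ c * / K)) by (field; split; lra).
    apply (is_lim_comp_quot Q psi); [exact HF | exact Hpsi |].
    apply (locally'_0_intro _ K HK). exact Hne.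
Qed.

End ExpReparametrization.

Definition frac_scale (k : R -> R) (alpha t : R) : R := Rpower (k t) (1 - alpha) / Derive k t.

Lemma frac_quot_exp_form (k : R -> R) (alpha : R) (F : R -> R) (t e : R) :
  frac_quot k alpha F t e =
  (F (t + k t * (exp (Rpower (k t) (- alpha) / Derive k t * e) - 1)) - F t) / e.
Proof.
  unfold frac_quot, frac_arg. do 3 f_equal.
  replace (e * Rpower (k t) (- alpha) / Derive k t)
    with (Rpower (k t) (- alpha) / Derive k t * e) by (unfold Rdiv; ring).
  ring.
Qed.

Section FracDeriv.

Variables (k : R -> R) (alpha t : R).
Hypotheses (Hk : 0 < k t) (Hk' : Derive k t <> 0).

Lemma frac_scale_neq0 : frac_scale k alpha t <> 0.
Proof.
  unfold frac_scale, Rdiv. apply Rmult_integral_contrapositive_currified.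
  - apply Rgt_not_eq, exp_pos.
  - now apply Rinv_neq_0_compat.
Qed.

Lemma frac_scale_exp_form :
  frac_scale k alpha t = k t * (Rpower (k t) (- alpha) / Derive k t).
Proof.
  unfold frac_scale. replace (1 - alpha) with (1 + - alpha) by ring.
  rewrite Rpower_plus, Rpower_1 by exact Hk. unfold Rdiv. ring.
Qed.

Lemma frac_exponent_neq0 : Rpower (k t) (- alpha) / Derive k t <> 0.
Proof.
  intros E. apply frac_scale_neq0. rewrite frac_scale_exp_form, E. ring.
Qed.

Lemma is_frac_deriv_iff_is_derive (F : R -> R) (d : R) :
  is_frac_deriv k alpha F t (frac_scale k alpha t * d) <-> is_derive F t d.
Proof.
  unfold is_frac_deriv. rewrite frac_scale_exp_form.
  set (c := Rpower (k t) (- alpha) / Derive k t).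
  assert (Hc : c <> 0) by exact frac_exponent_neq0.
  assert (Equot : forall e, (F (t + k t * (exp (c * e) - 1)) - F t) / e
                            = frac_quot k alpha F t e).
  { intros e. now rewrite frac_quot_exp_form. }
  split.
  - intros HF. replace d with (k t * c * d / (k t * c)) by (field; split; lra).
    apply (is_derive_of_exp_reparam_quot F t (k t) c Hk Hc).
    exact (is_lim_ext _ _ 0 _ (fun e => eq_sym (Equot e)) HF).
  - intros HF. apply (is_lim_ext _ _ 0 _ Equot).
    replace (k t * c * d) with (d * (k t * c)) by ring.
    exact (is_lim_exp_reparam_quot F t (k t) c Hk Hc d HF).
Qed.

Lemma frac_differentiable_is_derive (F : R -> R) :
  frac_differentiable k alpha F t ->
  exists d, is_derive F t d /\ frac_deriv k alpha F t = frac_scale k alpha t * d.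
Proof.
  intros [l Hl]. exists (l / frac_scale k alpha t).
  assert (El : l = frac_scale k alpha t * (l / frac_scale k alpha t))
    by (field; exact frac_scale_neq0).
  split.
  - apply is_frac_deriv_iff_is_derive. now rewrite <- El.
  - unfold frac_deriv. now rewrite (is_lim_unique _ _ _ Hl), <- El.
Qed.

End FracDeriv.

Theorem mainTheorem3 (a b alpha : R) (k : R -> R) (t : R) (f g : R -> R) :
  a < b ->
  0 < alpha <= 1 ->
  (* k continuous on [a,b] (within [a,b]) *)
  (forall s, a <= s <= b ->
     filterlim k (within (fun x => a <= x <= b) (locally s)) (locally (k s))) ->
  (* k nonnegative on [a,b] *)
  (forall s, a <= s <= b -> 0 <= k s) ->
  (* k differentiable with nonzero derivative at every interior point t > a *)
  (forall s, a < s < b -> ex_derive k s) ->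
  (forall s, a < s < b -> Derive k s <> 0) ->
  (* k nonzero at every t > a *)
  (forall s, a < s <= b -> k s <> 0) ->
  a < t < b -> 0 < t ->
  frac_differentiable k alpha f t ->
  frac_differentiable k alpha g t ->
  (* (1) linearity *)
  (forall lam mu : R,
     is_frac_deriv k alpha (fun s => lam * f s + mu * g s) t
       (lam * frac_deriv k alpha f t + mu * frac_deriv k alpha g t)) /\
  (* (2) power rule, real exponent *)
  (forall n : R,
     is_frac_deriv k alpha (fun s => Rpower s n) t
       (Rpower (k t) (1 - alpha) / Derive k t * (n * Rpower t (n - 1)))) /\
  (* (3) constants *)
  (forall c : R, is_frac_deriv k alpha (fun _ => c) t 0) /\
  (* (4) product rule *)
  is_frac_deriv k alpha (fun s => f s * g s) t
    (f t * frac_deriv k alpha g t + g t * frac_deriv k alpha f t) /\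
  (* (5) quotient rule *)
  (g t <> 0 ->
     is_frac_deriv k alpha (fun s => f s / g s) t
       ((g t * frac_deriv k alpha f t - f t * frac_deriv k alpha g t) / (g t) ^ 2)) /\
  (* (6) chain rule *)
  (ex_derive g t -> ex_derive f (g t) ->
     is_frac_deriv k alpha (fun s => f (g s)) t
       (Rpower (k t) (1 - alpha) / Derive k t * Derive f (g t) * Derive g t)).
Proof.
  intros _ _ _ Hk_nonneg _ HDk_neq0 Hk_neq0 Ht Ht0 Hf Hg.
  assert (Hk : 0 < k t)
    by (destruct (Hk_nonneg t ltac:(lra)) as [H|H]; [exact H | exfalso; apply (Hk_neq0 t); lra]).
  assert (HDk : Derive k t <> 0) by (apply HDk_neq0; lra).
  pose proof (fun F d => proj2 (is_frac_deriv_iff_is_derive k alpha t Hk HDk F d)) as frac_of_deriv.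
  destruct (frac_differentiable_is_derive k alpha t Hk HDk f Hf) as [df [Df ->]].
  destruct (frac_differentiable_is_derive k alpha t Hk HDk g Hg) as [dg [Dg ->]].
  fold (frac_scale k alpha t). set (s := frac_scale k alpha t) in *.
  split; [|split; [|split; [|split; [|split]]]].
  - intros lam mu.
    replace (lam * (s * df) + mu * (s * dg)) with (s * (lam * df + mu * dg)) by ring.
    apply frac_of_deriv, (is_derive_plus (fun x => lam * f x) (fun x => mu * g x));
      now apply is_derive_scal.
  - intros n. apply frac_of_deriv, is_derive_Reals, derivable_pt_lim_power, Ht0.
  - intros c. replace 0 with (s * 0) by ring. apply frac_of_deriv. exact (is_derive_const c t).
  - replace (f t * (s * dg) + g t * (s * df)) with (s * (df * g t + f t * dg)) by ring.
    apply frac_of_deriv, (is_derive_mult f g); [exact Df | exact Dg | exact Rmult_comm].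
  - intros Hgt.
    replace ((g t * (s * df) - f t * (s * dg)) / g t ^ 2)
      with (s * ((df * g t - f t * dg) / g t ^ 2)) by (field; exact Hgt).
    apply frac_of_deriv, is_derive_div; assumption.
  - intros Hdg Hdf.
    replace (s * Derive f (g t) * Derive g t) with (s * (Derive g t * Derive f (g t))) by ring.
    apply frac_of_deriv, (is_derive_comp f g); now apply Derive_correct.
Qed.
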